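(* Let $R$ be an integral domain, $p,q\in R$, $m\ge1$ an integer, and let $a=(a_n)_{n\ge0}$ be a linear recurrent sequence over $R$ with characteristic polynomial $(t^2-pt+q)^m$. Then $L^{(-1,p)}(a)$ is a linear recurrent sequence with the same characteristic polynomial $(t^2-pt+q)^m$.
   Context: A sequence $(a_n)$ is linear recurrent with characteristic polynomial $t^d-c_1t^{d-1}-\dots-c_d$ if $a_{n+d}=c_1a_{n+d-1}+\dots+c_da_n$ for all $n\ge0$. For $h,y\in R$, $L^{(h,y)}(a)$ is the sequence $b$ with $b_n=\sum_{i=0}^n\binom{n}{i}h^iy^{n-i}a_i$; thus $(L^{(-1,p)}(a))_n=\sum_{i=0}^n\binom{n}{i}(-1)^ip^{n-i}a_i$. *)

From mathcomp Require Import all_boot all_algebra.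
Set Implicit Arguments. Unset Strict Implicit. Unset Printing Implicit Defensive.
Import GRing.Theory.
Local Open Scope ring_scope.

(* A sequence a : nat -> R is linear recurrent with (monic) characteristic
   polynomial P = t^d - c_1 t^(d-1) - ... - c_d  (d = size P - 1) iff
   a_(n+d) = c_1 a_(n+d-1) + ... + c_d a_n for all n, i.e. iff
   sum_(i <= d) P_i a_(n+i) = 0 for all n. *)
Definition linrec (R : nzRingType) (P : {poly R}) (a : nat -> R) : Prop :=
  P \is monic /\
  forall n : nat, \sum_(i < size P) P`_i * a (n + i)%N = 0.

Definition Ltrans (R : nzRingType) (h y : R) (a : nat -> R) : nat -> R :=
  fun n => \sum_(i < n.+1) ('C(n, i))%:R * (h ^+ i) * (y ^+ (n - i)) * a i.

From mathcomp Require Import all_boot all_algebra.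
From mathcomp Require Import ring.
Import GRing.Theory.
Local Open Scope ring_scope.

(* A sequence a is identified with the linear functional P |-> sum_i P_i a_i
   on R[t]; a satisfies the recurrence with characteristic polynomial Q iff
   this functional kills the ideal (Q).  The transform L^(h,y) corresponds to
   the substitution t |-> y + h t, since (L^(h,y) a)_n is the value of the
   functional at (y + h t)^n.  Hence L^(h,y) a satisfies the recurrence of Q
   as soon as Q(y + h t) = Q(t), and t^2 - p t + q is invariant under
   t |-> p - t (it swaps the two roots). *)

Section SequenceFunctional.
Variable R : comNzRingType.
Implicit Types (a : nat -> R) (P Q S : {poly R}).

Definition seqfun a P : R := \sum_(i < size P) P`_i * a i.

Definition shift (n : nat) a : nat -> R := fun i => a (n + i)%N.

Lemma seqfun_widen a P N :
  (size P <= N)%N -> seqfun a P = \sum_(i < N) P`_i * a i.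
Proof.
move=> leN; rewrite /seqfun (big_ord_widen _ (fun i => P`_i * a i) leN).
rewrite big_mkcond /=; apply: eq_bigr => i _.
by case: ltnP => // /(nth_default 0) ->; rewrite mul0r.
Qed.

Lemma seqfunD a : {morph seqfun a : P Q / P + Q}.
Proof.
move=> P Q; set N := maxn (size P) (size Q).
rewrite !(@seqfun_widen a _ N) ?size_polyD ?leq_maxl ?leq_maxr //.
by rewrite -big_split; apply: eq_bigr => i _; rewrite coefD mulrDl.
Qed.

Lemma seqfun0 a : seqfun a 0 = 0.
Proof. by rewrite /seqfun size_poly0 big_ord0. Qed.

Lemma seqfunZ a c P : seqfun a (c *: P) = c * seqfun a P.
Proof.
rewrite (@seqfun_widen _ _ (size P)) ?size_scale_leq // mulr_sumr.
by apply: eq_bigr => i _; rewrite coefZ mulrA.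
Qed.

Lemma seqfun_sum a I (r : seq I) (F : I -> {poly R}) :
  seqfun a (\sum_(i <- r) F i) = \sum_(i <- r) seqfun a (F i).
Proof. exact: (big_morph (seqfun a) (seqfunD a) (seqfun0 a)). Qed.

Lemma seqfunXn a n : seqfun a 'X^n = a n.
Proof.
rewrite /seqfun size_polyXn big_ord_recr /= coefXn eqxx mul1r big1 ?add0r //.
by move=> i _; rewrite coefXn (ltn_eqF (ltn_ord i)) mul0r.
Qed.

Lemma seqfun_mulX a P : seqfun a (P * 'X) = seqfun (shift 1 a) P.
Proof.
have leS : (size (P * 'X)%R <= (size P).+1)%N.
  by rewrite (leq_trans (size_polyMleq _ _)) // size_polyX addn2.
rewrite (seqfun_widen a _ _ leS) big_ord_recl coefMX eqxx mul0r add0r.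
by apply: eq_bigr => i _; rewrite coefMX.
Qed.

Lemma seqfun_mulXn a n P : seqfun a (P * 'X^n) = seqfun (shift n a) P.
Proof.
elim: n a => [|n IHn] a; first by rewrite mulr1.
by rewrite exprSr mulrA seqfun_mulX IHn.
Qed.

Lemma seqfun_mul_eq0 a Q S :
  (forall n, seqfun (shift n a) Q = 0) -> seqfun a (S * Q) = 0.
Proof.
move=> aQ; rewrite -[S]coefK poly_def mulr_suml seqfun_sum big1 // => i _.
by rewrite -scalerAl seqfunZ -commr_polyXn seqfun_mulXn aQ mulr0.
Qed.

Lemma Ltrans_seqfun h y a n :
  Ltrans h y a n = seqfun a ((y%:P + h *: 'X) ^+ n).
Proof.
rewrite exprDn seqfun_sum; apply: eq_bigr => i _.
rewrite -scaler_nat exprZn -rmorphXn mul_polyC !scalerA !seqfunZ seqfunXn.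
by congr (_ * _); ring.
Qed.

Lemma linrec_Ltrans h y Q a :
  Q \Po (y%:P + h *: 'X) = Q -> linrec Q a -> linrec Q (Ltrans h y a).
Proof.
move=> QY [Qmonic aQ]; split=> // n; set Y := y%:P + h *: 'X.
have -> : \sum_(i < size Q) Q`_i * Ltrans h y a (n + i)%N
          = seqfun a ((Q \Po Y) * Y ^+ n).
  rewrite comp_polyE mulr_suml seqfun_sum; apply: eq_bigr => i _.
  by rewrite Ltrans_seqfun -scalerAl -exprD addnC seqfunZ.
(* [aQ n] is [seqfun (shift n a) Q = 0] up to unfolding. *)
by rewrite QY mulrC seqfun_mul_eq0.
Qed.

End SequenceFunctional.

Lemma comp_poly_reflect_quadratic (R : comNzRingType) (p q : R) :
  ('X ^+ 2 - p *: 'X + q%:P) \Po (p%:P + (-1) *: 'X) = 'X ^+ 2 - p *: 'X + q%:P.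
Proof.
rewrite comp_polyD comp_polyB comp_polyZ comp_polyX comp_polyC comp_Xn_poly.
by rewrite -!mul_polyC polyCN; ring.
Qed.

Theorem corollary13 (R : idomainType) (p q : R) (m : nat) (a : nat -> R) :
  (1 <= m)%N ->
  linrec (('X ^+ 2 - p *: 'X + q%:P) ^+ m) a ->
  linrec (('X ^+ 2 - p *: 'X + q%:P) ^+ m) (Ltrans (-1) p a).
Proof.
move=> _; apply: linrec_Ltrans.
by rewrite rmorphXn /= comp_poly_reflect_quadratic.
Qed.
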